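(* Let $p$ be a prime, $d\ge1$, $g\in L^2(\mathbb{Z}_p^d)$ with $\|g\|_2=1$, and $A,B\subseteq\mathbb{Z}_p^d$. Let $E=\operatorname{supp}(g)=\{x: g(x)\neq 0\}$ and assume $|E|=|B|$. Then the Gabor system $\mathcal{G}(g,A,B)$ is an orthonormal basis of $L^2(\mathbb{Z}_p^d)$ if and only if all of the following hold: (i) $|g|=|E|^{-1/2}1_E$; (ii) $(E,B)$ is a spectral pair; (iii) $(E,A)$ is a tiling pair.
   Context: $\mathbb{Z}_p$ is the field of integers mod a prime $p$, $\mathbb{Z}_p^d$ the $d$-dimensional vector space over it, and $x\cdot b=\sum_i x_ib_i$. $\chi(t)=e^{2\pi i t/p}$ for $t\in\mathbb{Z}_p$. $L^2(\mathbb{Z}_p^d)$ is the space of functions $\mathbb{Z}_p^d\to\mathbb{C}$ with inner product $\langle f,h\rangle=\sum_{x\in\mathbb{Z}_p^d} f(x)\overline{h(x)}$ (counting measure). For $g\in L^2(\mathbb{Z}_p^d)$ and $A,B\subseteq\mathbb{Z}_p^d$, the Gabor system is $\mathcal{G}(g,A,B)=\{x\mapsto g(x-a)\chi(x\cdot b)\}_{a\in A,\ b\in B}$ (indexed by pairs $(a,b)$). $1_E$ denotes the indicator function of $E$. A pair $(E,B)$ is a spectral pair if the functions $\{x\mapsto\chi(x\cdot b)\}_{b\in B}$, restricted to $E$, form an orthogonal basis of $L^2(E)$. A pair $(E,A)$ is a tiling pair if $\sum_{a\in A}1_E(x-a)=1$ for all $x\in\mathbb{Z}_p^d$. *)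

From HB Require Import structures.
From mathcomp Require Import all_boot all_order all_algebra algC.
Set Implicit Arguments. Unset Strict Implicit. Unset Printing Implicit Defensive.
Import Order.TTheory GRing.Theory Num.Theory.
Local Open Scope ring_scope.

Definition Vp (p d : nat) := 'rV['F_p]_d.

Definition dotp (p d : nat) (x b : Vp p d) : 'F_p := \sum_(i < d) x 0 i * b 0 i.

(* omega = e^{2 pi i / p}: p.-root (-1) is e^{i pi / p} (minimal argument) *)
Definition omega (p : nat) : algC := (p.-root (-1)) ^+ 2.

(* chi(t) = e^{2 pi i t / p}, t read as its representative in {0,..,p-1} *)
Definition chi (p : nat) (t : 'F_p) : algC := omega p ^+ (nat_of_ord t).

(* inner product on L^2(Z_p^d), counting measure *)
Definition inner (p d : nat) (f h : Vp p d -> algC) : algC :=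
  \sum_(x : Vp p d) f x * (h x)^*.

Definition l2norm (p d : nat) (f : Vp p d -> algC) : algC := sqrtC (inner f f).

Definition supp (p d : nat) (g : Vp p d -> algC) : {set Vp p d} :=
  [set x | g x != 0].

Definition gabor (p d : nat) (g : Vp p d -> algC) (a b : Vp p d) : Vp p d -> algC :=
  fun x => g (x - a) * chi (dotp x b).

Definition gabor_ONB (p d : nat) (g : Vp p d -> algC) (A B : {set Vp p d}) : Prop :=
  (forall a b a' b', a \in A -> b \in B -> a' \in A -> b' \in B ->
     inner (gabor g a b) (gabor g a' b') = ((a, b) == (a', b'))%:R)
  /\ (forall f : Vp p d -> algC, exists c : Vp p d -> Vp p d -> algC,
        forall x, f x = \sum_(a in A) \sum_(b in B) c a b * gabor g a b x).

Definition spectral_pair (p d : nat) (E B : {set Vp p d}) : Prop :=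
  (forall b, b \in B -> \sum_(x in E) chi (dotp x b) * (chi (dotp x b))^* != 0)
  /\ (forall b b', b \in B -> b' \in B -> b != b' ->
        \sum_(x in E) chi (dotp x b) * (chi (dotp x b'))^* = 0)
  /\ (forall f : Vp p d -> algC, exists c : Vp p d -> algC,
        forall x, x \in E -> f x = \sum_(b in B) c b * chi (dotp x b)).

Definition tiling_pair (p d : nat) (E A : {set Vp p d}) : Prop :=
  forall x : Vp p d, (\sum_(a in A) nat_of_bool ((x - a)%R \in E))%N = 1%N.

From HB Require Import structures.
From mathcomp Require Import all_boot all_order all_algebra algC.
From mathcomp Require Import spectral ring.
From Stdlib Require Import IndefiniteDescription.

(* Translation by a and modulation by b multiply the inner products of atoms
   with a common translate by unimodular characters, so everything reduces to
   the modulates {x |-> g x chi(x.b)}_(b in B).  If the Gabor system is an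
   orthonormal basis, these modulates are orthonormal, i.e. the square
   |E| x |B| matrix (g x chi(x.b)) has orthonormal columns; being square it is
   unitary, so its rows are orthonormal as well.  The diagonal of the row
   relations forces |g|^2 = 1/|B| on E, and the off-diagonal ones let the
   characters of B interpolate any function on E.  Expanding the point mass at x
   gives sum_(a,b) |g(x-a)|^2 = 1, i.e. the translates of E by A tile.
   Conversely, under the tiling distinct translates of E are disjoint, so atoms
   with different translates are orthogonal, those with a common translate are
   orthogonal by the spectral property, and a function is expanded on the unique
   translate containing each point. *)

Set Implicit Arguments. Unset Strict Implicit. Unset Printing Implicit Defensive.
Import Order.TTheory GRing.Theory Num.Theory.
Local Open Scope ring_scope.

Section Characters.
Variables (p d : nat).
Hypothesis p_prime : prime p.

Lemma omega_expp : omega p ^+ p = 1.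
Proof.
rewrite /omega -exprM mulnC exprM rootCK ?prime_gt0 //.
by rewrite expr2 mulrNN mulr1.
Qed.

Lemma chiD (s t : 'F_p) : chi (s + t) = chi s * chi t.
Proof.
have val_add : nat_of_ord (s + t) = ((s + t) %% p)%N.
  have -> : nat_of_ord (s + t) = ((s + t) %% (Zp_trunc (pdiv p)).+2)%N by [].
  by congr (_ %% _)%N; exact: Fp_cast.
by rewrite /chi val_add expr_mod ?omega_expp // exprD.
Qed.

Lemma norm_chi (t : 'F_p) : `|chi t| = 1.
Proof.
have norm_omega : `|omega p| = 1.
  apply/eqP; rewrite -(pexpr_eq1 (prime_gt0 p_prime)) ?normr_ge0 //.
  by rewrite -normrX omega_expp normr1.
by rewrite /chi normrX norm_omega expr1n.
Qed.

Lemma chi_mul_conj (t : 'F_p) : chi t * (chi t)^* = 1.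
Proof. by rewrite -normCK norm_chi expr1n. Qed.

Lemma chi_neq0 (t : 'F_p) : chi t != 0.
Proof. by rewrite -normr_eq0 norm_chi oner_eq0. Qed.

Lemma dotpDl (x y b : Vp p d) : dotp (x + y) b = dotp x b + dotp y b.
Proof. by rewrite /dotp -big_split; apply: eq_bigr => i _; rewrite mxE mulrDl. Qed.

Lemma dotpBl (x y b : Vp p d) : dotp (x - y) b = dotp x b - dotp y b.
Proof. by rewrite /dotp -sumrB; apply: eq_bigr => i _; rewrite !mxE mulrBl. Qed.

End Characters.

Section Atoms.
Variables (p d : nat) (g : Vp p d -> algC).
Hypothesis p_prime : prime p.
Local Notation E := (supp g).

Lemma nsupp_eq0 x : x \notin E -> g x = 0.
Proof. by rewrite inE negbK => /eqP. Qed.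

Lemma inner_gabor_translate a b b' :
  inner (gabor g a b) (gabor g a b') =
  chi (dotp a b) * (chi (dotp a b'))^* * inner (gabor g 0 b) (gabor g 0 b').
Proof.
rewrite /inner (reindex_inj (addIr a)) mulr_sumr; apply: eq_bigr => y _.
by rewrite /gabor addrK subr0 !dotpDl !chiD // !rmorphM /=; ring.
Qed.

Lemma inner_gabor_diag a b : inner (gabor g a b) (gabor g a b) = inner g g.
Proof.
rewrite /inner (reindex_inj (addIr a)); apply: eq_bigr => y _.
by rewrite /gabor addrK rmorphM /= mulrACA chi_mul_conj // mulr1.
Qed.

Lemma inner_gabor_disjoint a a' b b' :
  (forall x, x - a \in E -> x - a' \in E -> False) ->
  inner (gabor g a b) (gabor g a' b') = 0.
Proof.
move=> disj; apply: big1 => x _; rewrite /gabor rmorphM /= mulrACA.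
have [xa | /nsupp_eq0 ->] := boolP (x - a \in E); last by rewrite !mul0r.
have [xa' | /nsupp_eq0 ->] := boolP (x - a' \in E).
  by case: (disj x).
by rewrite conjC0 mulr0 mul0r.
Qed.

Lemma inner_modulates_supp b b' :
  inner (gabor g 0 b) (gabor g 0 b') =
  \sum_(x in E) g x * chi (dotp x b) * (g x * chi (dotp x b'))^*.
Proof.
rewrite /inner [RHS]big_mkcond; apply: eq_bigr => x _; rewrite /gabor subr0.
by case: ifP => // /negbT /nsupp_eq0 ->; rewrite !mul0r.
Qed.

Lemma inner_modulates_const_window (k : algC) b b' :
  (forall y, g y * (g y)^* = if y \in E then k else 0) ->
  inner (gabor g 0 b) (gabor g 0 b') =
  k * \sum_(x in E) chi (dotp x b) * (chi (dotp x b'))^*.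
Proof.
move=> const_window; rewrite inner_modulates_supp mulr_sumr.
by apply: eq_bigr => x xE; rewrite rmorphM /= mulrACA const_window xE.
Qed.

End Atoms.

Lemma unitarymx_trmx_eq (C : numClosedFieldType) m n (M : 'M[C]_(m, n)) :
  m = n -> M^T \is unitarymx -> M \is unitarymx.
Proof. by move=> eq_mn; case: n / eq_mn M => M; rewrite trmx_unitary. Qed.

Section Modulates.
Variables (p d : nat) (g : Vp p d -> algC) (B : {set Vp p d}).
Local Notation E := (supp g).
Hypothesis card_supp : #|E| = #|B|.
Hypothesis modulates_orthonormal :
  {in B &, forall b b', inner (gabor g 0 b) (gabor g 0 b') = (b == b')%:R}.

Lemma modulates_rows_orthonormal x y : x \in E -> y \in E ->
  \sum_(b in B) g x * chi (dotp x b) * (g y * chi (dotp y b))^* = (x == y)%:R.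
Proof.
move=> xE yE.
pose N := \matrix_(i < #|E|, j < #|B|)
  (g (enum_val i) * chi (dotp (enum_val i) (enum_val j))).
have /unitarymxP N_unitary : N \is unitarymx.
  apply: unitarymx_trmx_eq card_supp _; apply/unitarymxP/matrixP => j k.
  rewrite !mxE -(inj_eq enum_val_inj) -modulates_orthonormal ?enum_valP //.
  rewrite inner_modulates_supp [RHS]big_enum_val.
  by apply: eq_bigr => i _; rewrite !mxE.
move/matrixP: N_unitary => /(_ (enum_rank_in xE x) (enum_rank_in xE y)).
rewrite !mxE -(inj_eq enum_val_inj) !enum_rankK_in // => <-.
rewrite big_enum_val; apply: eq_bigr => j _.
by rewrite !mxE !enum_rankK_in.
Qed.

Hypothesis p_prime : prime p.

Lemma window_mul_conj y : g y * (g y)^* = if y \in E then #|B|%:R^-1 else 0.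
Proof.
case: ifP => [yE | /negbT /nsupp_eq0 ->]; last by rewrite mul0r.
have card_neq0 : #|B|%:R != 0 :> algC.
  by rewrite -card_supp pnatr_eq0 -lt0n; apply/card_gt0P; exists y.
have := modulates_rows_orthonormal yE yE.
under eq_bigr => b _ do rewrite rmorphM /= mulrACA chi_mul_conj // mulr1.
rewrite sumr_const -[_ *+ _]mulr_natl eqxx => card_mul.
by apply: (mulfI card_neq0); rewrite card_mul divff.
Qed.

Lemma modulates_span_supp (f : Vp p d -> algC) :
  exists c : Vp p d -> algC,
    forall x, x \in E -> f x = \sum_(b in B) c b * chi (dotp x b).
Proof.
exists (fun b => \sum_(y in E) (g y * chi (dotp y b))^* * (g y * f y)) => x xE.
have gx_neq0 : g x != 0 by move: xE; rewrite inE.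
apply: (mulfI gx_neq0).
transitivity (\sum_(y in E) (x == y)%:R * (g y * f y)).
  rewrite (bigD1 x) //= eqxx mul1r big1 ?addr0 // => y /andP[_ yx].
  by rewrite eq_sym (negbTE yx) mul0r.
under eq_bigr => y yE do rewrite -(modulates_rows_orthonormal xE yE) mulr_suml.
rewrite exchange_big mulr_sumr; apply: eq_bigr => b _.
by rewrite mulr_suml mulr_sumr; apply: eq_bigr => y _; ring.
Qed.

End Modulates.

Section GaborONB.
Variables (p d : nat) (g : Vp p d -> algC) (A B : {set Vp p d}).
Local Notation E := (supp g).
Hypothesis gabor_orthonormal :
  forall a b a' b', a \in A -> b \in B -> a' \in A -> b' \in B ->
  inner (gabor g a b) (gabor g a' b') = ((a, b) == (a', b'))%:R.
Hypothesis gabor_spanning : forall f : Vp p d -> algC,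
  exists c : Vp p d -> Vp p d -> algC,
    forall x, f x = \sum_(a in A) \sum_(b in B) c a b * gabor g a b x.

Lemma gabor_expansion_coef (f : Vp p d -> algC)
    (c : Vp p d -> Vp p d -> algC) :
  (forall x, f x = \sum_(a in A) \sum_(b in B) c a b * gabor g a b x) ->
  forall a0 b0, a0 \in A -> b0 \in B -> c a0 b0 = inner f (gabor g a0 b0).
Proof.
move=> f_exp a0 b0 a0A b0B; rewrite /inner.
under eq_bigr => x _ do rewrite f_exp big_distrl.
rewrite exchange_big /=.
transitivity (\sum_(a in A) \sum_(b in B) c a b * ((a, b) == (a0, b0))%:R).
  rewrite (bigD1 a0) //= (bigD1 b0) //= eqxx mulr1.
  rewrite big1 ?addr0 => [|b /andP[_ nb]]; last first.
    by rewrite xpair_eqE (negbTE nb) andbF mulr0.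
  rewrite big1 ?addr0 // => a /andP[_ na]; apply: big1 => b _.
  by rewrite xpair_eqE (negbTE na) mulr0.
apply: eq_bigr => a aA; under eq_bigr => x _ do rewrite big_distrl.
rewrite exchange_big /=; apply: eq_bigr => b bB.
rewrite -gabor_orthonormal // /inner mulr_sumr.
by apply: eq_bigr => x _; rewrite mulrA.
Qed.

Lemma gabor_parseval x :
  \sum_(a in A) \sum_(b in B) gabor g a b x * (gabor g a b x)^* = 1.
Proof.
have [c delta_exp] := gabor_spanning (fun y => (y == x)%:R).
have coef a b : a \in A -> b \in B -> c a b = (gabor g a b x)^*.
  move=> aA bB; rewrite (gabor_expansion_coef delta_exp) // /inner.
  rewrite (bigD1 x) //= eqxx mul1r big1 ?addr0 // => y /negbTE ->.
  by rewrite mul0r.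
transitivity ((x == x)%:R : algC); last by rewrite eqxx.
rewrite delta_exp; apply: eq_bigr => a aA; apply: eq_bigr => b bB.
by rewrite coef // mulrC.
Qed.

Hypothesis p_prime : prime p.

Lemma gabor_ONB_modulates_orthonormal :
  {in B &, forall b b', inner (gabor g 0 b) (gabor g 0 b') = (b == b')%:R}.
Proof.
have [A0 | [a0 a0A]] := set_0Vmem A.
  have := gabor_parseval 0; rewrite A0 big_set0 => /eqP.
  by rewrite eq_sym oner_eq0.
move=> b b' bB b'B; have := gabor_orthonormal a0A bB a0A b'B.
rewrite inner_gabor_translate // xpair_eqE eqxx /=.
have [<- | _] := eqVneq b b'; first by rewrite chi_mul_conj // mul1r.
move/eqP; rewrite !mulf_eq0 conjC_eq0 !(negbTE (chi_neq0 p_prime _)) /=.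
by move/eqP.
Qed.

Hypothesis card_supp : #|E| = #|B|.

Let window_mul_conj_ONB :=
  window_mul_conj card_supp gabor_ONB_modulates_orthonormal p_prime.

Lemma gabor_ONB_window x :
  `|g x| = if x \in E then (sqrtC #|E|%:R)^-1 else 0.
Proof.
case: ifP => [xE | /negbT /nsupp_eq0 ->]; last by rewrite normr0.
apply/eqP; rewrite -(eqrXn2 (n := 2)) // ?invr_ge0 ?sqrtC_ge0 ?ler0n //.
by rewrite normCK window_mul_conj_ONB xE exprVn sqrtCK card_supp.
Qed.

Lemma gabor_ONB_spectral : spectral_pair E B.
Proof.
have card_neq0 b : b \in B -> #|B|%:R != 0 :> algC.
  by move=> bB; rewrite pnatr_eq0 -lt0n; apply/card_gt0P; exists b.
split; [|split].
- move=> b bB; under eq_bigr => x _ do rewrite chi_mul_conj //.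
  by rewrite sumr_const card_supp -[_ *+ _]mulr_natl mulr1 (card_neq0 b).
- move=> b b' bB b'B nbb'; have := gabor_ONB_modulates_orthonormal bB b'B.
  rewrite (negbTE nbb') (inner_modulates_const_window _ _ window_mul_conj_ONB).
  move/eqP.
  by rewrite mulf_eq0 invr_eq0 (negbTE (card_neq0 b bB)) => /eqP.
- exact: modulates_span_supp card_supp gabor_ONB_modulates_orthonormal.
Qed.

Lemma gabor_ONB_tiling : tiling_pair E A.
Proof.
move=> x; have fiber a :
    \sum_(b in B) gabor g a b x * (gabor g a b x)^* = (x - a \in E)%:R.
  under eq_bigr => b _ do
    rewrite rmorphM /= mulrACA chi_mul_conj // mulr1 window_mul_conj_ONB.
  rewrite sumr_const; case: ifP => [xaE | _]; last by rewrite mul0rn.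
  rewrite -[_ *+ _]mulr_natl mulfV // -card_supp pnatr_eq0 -lt0n.
  by apply/card_gt0P; exists (x - a).
apply/eqP; rewrite -(eqr_nat algC) natr_sum; apply/eqP.
by rewrite (eq_bigr _ (fun a _ => esym (fiber a))) gabor_parseval.
Qed.

End GaborONB.

Lemma tiling_pair_cover p d (E A : {set Vp p d}) x :
  tiling_pair E A -> exists2 a, a \in A & x - a \in E.
Proof.
move=> tiling.
have [a /andP[aA xaE] | none] := pickP [pred a | (a \in A) && (x - a \in E)].
  by exists a.
move: (tiling x); rewrite big1 // => a aA.
by have := none a; rewrite /= aA /= => ->.
Qed.

Lemma tiling_pair_uniq p d (E A : {set Vp p d}) x a a' :
  tiling_pair E A -> a \in A -> a' \in A -> x - a \in E -> x - a' \in E -> a = a'.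
Proof.
move=> tiling aA a'A xaE xa'E; apply/eqP/negPn/negP => naa'.
move: (tiling x); rewrite (bigD1 a) //= (bigD1 a') /=.
  by rewrite xaE xa'E addnA.
by rewrite a'A eq_sym naa'.
Qed.

Section GaborONBOfTiling.
Variables (p d : nat) (g : Vp p d -> algC) (A B : {set Vp p d}).
Local Notation E := (supp g).
Hypothesis p_prime : prime p.
Hypothesis spectral : spectral_pair E B.
Hypothesis tiling : tiling_pair E A.
Hypothesis norm_g : inner g g = 1.
Hypothesis window :
  forall x, `|g x| = if x \in E then (sqrtC #|E|%:R)^-1 else 0.

Lemma gabor_orthonormal_of_tiling a b a' b' :
  a \in A -> b \in B -> a' \in A -> b' \in B ->
  inner (gabor g a b) (gabor g a' b') = ((a, b) == (a', b'))%:R.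
Proof.
move=> aA bB a'A b'B.
have [<- | naa'] := eqVneq a a'; last first.
  rewrite xpair_eqE (negbTE naa') /=; apply: inner_gabor_disjoint => x xaE xa'E.
  by case/eqP: naa'; exact: tiling_pair_uniq tiling aA a'A xaE xa'E.
rewrite xpair_eqE eqxx /=; have [<- | nbb'] := eqVneq b b'.
  by rewrite inner_gabor_diag.
have const_window y : g y * (g y)^* = if y \in E then #|E|%:R^-1 else 0.
  by rewrite -normCK window; case: ifP => _; rewrite ?expr0n // exprVn sqrtCK.
case: spectral => _ [chi_orth _].
rewrite inner_gabor_translate // (inner_modulates_const_window _ _ const_window).
by rewrite chi_orth // !mulr0.
Qed.

Lemma gabor_spanning_of_tiling (f : Vp p d -> algC) :
  exists c : Vp p d -> Vp p d -> algC,
    forall x, f x = \sum_(a in A) \sum_(b in B) c a b * gabor g a b x.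
Proof.
case: spectral => _ [_ chi_span].
have [C C_exp] : exists C : Vp p d -> Vp p d -> algC, forall a x, x \in E ->
    f (x + a) / g x = \sum_(b in B) C a b * chi (dotp x b).
  exact: functional_choice (fun a => chi_span (fun x => f (x + a) / g x)).
exists (fun a b => C a b * chi (- dotp a b)) => x.
have [a1 a1A xa1E] := tiling_pair_cover x tiling.
rewrite (bigD1 a1) //= [X in _ + X]big1 ?addr0; last first.
  move=> a /andP[aA na1]; apply: big1 => b _.
  have [xaE | /nsupp_eq0 gxa0] := boolP (x - a \in E).
    by case/eqP: na1; exact: tiling_pair_uniq tiling aA a1A xaE xa1E.
  by rewrite /gabor gxa0 !mul0r mulr0.
have gxa1_neq0 : g (x - a1) != 0 by move: xa1E; rewrite inE.
transitivity (g (x - a1) * (f (x - a1 + a1) / g (x - a1))).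
  by rewrite subrK mulrC divfK.
rewrite C_exp // mulr_sumr; apply: eq_bigr => b _.
by rewrite /gabor dotpBl chiD //; ring.
Qed.

End GaborONBOfTiling.

Theorem theorem1p3 (p d : nat) (hp : prime p) (hd : (1 <= d)%N)
  (g : Vp p d -> algC) (A B : {set Vp p d})
  (hg : l2norm g = 1) (hEB : #|supp g| = #|B|) :
  gabor_ONB g A B <->
  [/\ (forall x, `|g x| = (if x \in supp g then (sqrtC (#|supp g|%:R))^-1 else 0)),
      spectral_pair (supp g) B
    & tiling_pair (supp g) A].
Proof.
split=> [[orth span] | [window spectral tiling]].
  split.
  - exact: gabor_ONB_window orth span hp hEB.
  - exact: gabor_ONB_spectral orth span hp hEB.
  - exact: gabor_ONB_tiling orth span hp hEB.
have norm_g : inner g g = 1.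
  by rewrite -[inner g g]sqrtCK -/(l2norm g) hg expr1n.
split; first exact: gabor_orthonormal_of_tiling.
exact: gabor_spanning_of_tiling.
Qed.
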